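(* Let $M$ be a closed manifold immersed in $(V,\omega)=(\mathbb{R}^{2d},\sum_i dx_i\wedge dy_i)$. (1) Let $n$ be odd. An $n$-gon $\mathbf{Z}=(z_1,\dots,z_n)$ in $V$ is an $n$-periodic orbit of the outer symplectic billiard correspondence if and only if its midpoint polygon $\mathbf{Q}=(Q_1,\dots,Q_n)$, $Q_i=\tfrac12(z_i+z_{i+1})$ (indices mod $n$), is inscribed in $M$ and is a critical point of the restriction to $M^{\times n}$ of $$F(Q_1,\dots,Q_n)=2\sum_{1\le i<j\le n}(-1)^{i+j-1}\omega(Q_i,Q_j).$$ (2) Let $L_1=\mathbb{R}^d_x\times\{0\}$ and $L_2=\{0\}\times\mathbb{R}^d_y$. A polygonal line $\mathbf{Z}=(z_1,\dots,z_{n+1})$ is an $n$-link outer symplectic billiard orbit connecting $L_1$ and $L_2$ if and only if the polygon $\mathbf{Q}=(Q_1,\dots,Q_n)$, $Q_i=\tfrac12(z_i+z_{i+1})$, is inscribed in $M$ and is a critical point of the restriction to $M^{\times n}$ of $$G(Q_1,\dots,Q_n)=2\sum_{i=1}^n q_i\cdot q_i'+4\sum_{1\le i<j\le n}(-1)^{j-i}q_j\cdot q_i',$$ where $Q_i=(q_i,q_i')$ with $q_i,q_i'\in\mathbb{R}^d$.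
   Context: Points of $V$ are written $(x,y)$ with $x,y\in\mathbb{R}^d$, and $\omega((x,y),(x',y'))=x\cdot y'-y\cdot x'$. Points of $M$ are identified with their images; for a point $Q$ of $M$, $T^\omega_QM=\{\xi:\omega(\xi,\zeta)=0\ \forall\zeta\in T_QM\}$. Two points $z,z'$ are in outer symplectic billiard correspondence with respect to $M$ if $\tfrac12(z+z')=Q$ is a point of $M$ and $z'-z\in T^\omega_QM$. An $n$-periodic orbit is an $n$-gon $(z_1,\dots,z_n)$ with $z_i,z_{i+1}$ in correspondence for all $i$ (indices mod $n$). An $n$-link orbit connecting $L_1$ and $L_2$ is $(z_1,\dots,z_{n+1})$ with $z_1\in L_1$, $z_{n+1}\in L_2$ and $z_i,z_{i+1}$ in correspondence for $i=1,\dots,n$. ''Inscribed in $M$'' means every $Q_i$ is a point of $M$. *)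

From HB Require Import structures.
From mathcomp Require Import all_boot all_order all_algebra.
From mathcomp Require Import all_classical all_reals all_analysis.
Set Implicit Arguments. Unset Strict Implicit. Unset Printing Implicit Defensive.
Import Order.TTheory GRing.Theory Num.Theory.
Local Open Scope ring_scope.

(* V = R^d_x * R^d_y ; a point is (x, y). *)
Definition V (R : realType) (d : nat) := ('rV[R]_d * 'rV[R]_d)%type.

Definition dot (R : realType) (d : nat) (u v : 'rV[R]_d) : R :=
  \sum_(i < d) u ord0 i * v ord0 i.

Definition omega (R : realType) (d : nat) (z z' : V R d) : R :=
  dot z.1 z'.2 - dot z.2 z'.1.

(* The immersed manifold M is given by an immersion phi : N -> V, points of M
   being identified with points p of N (image phi p); T p is the tangent space
   T_{phi p} M = d phi_p (T_p N), a linear subspace of V. *)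

Definition in_somp (R : realType) (d : nat) (T : {vspace V R d}) (xi : V R d) :=
  forall zeta : V R d, zeta \in T -> omega xi zeta = 0.

Definition osb_corr (R : realType) (d : nat) (N : Type) (phi : N -> V R d)
    (T : N -> {vspace V R d}) (z z' : V R d) :=
  exists p : N, phi p = (1/2 : R) *: (z + z') /\ in_somp (T p) (z' - z).

(* p : 'I_n -> N (a point of M^n) is a critical point of the restriction of
   Fn : (I_n -> V) -> R to M^n: the derivative of Fn at Q = phi o p vanishes on
   every tangent vector (xi_i) with xi_i in T_{Q_i} M. *)
Definition crit_on_Mn (R : realType) (d : nat) (N : Type) (phi : N -> V R d)
    (T : N -> {vspace V R d}) (n : nat) (Fn : ('I_n -> V R d) -> R)
    (p : 'I_n -> N) :=
  forall xi : 'I_n -> V R d, (forall i, xi i \in T (p i)) ->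
    is_derive (0 : R) (1 : R) (fun t : R => Fn (fun i => phi (p i) + t *: xi i)) 0.

(* F(Q) = 2 sum_{1<=i<j<=n} (-1)^(i+j-1) omega(Q_i,Q_j); with 0-based indices
   the exponent i+j-1 becomes (i+1)+(j+1)-1 = i+j+1. *)
Definition Ffun (R : realType) (d n : nat) (Q : 'I_n -> V R d) : R :=
  2 * \sum_(i < n) \sum_(j < n | (i < j)%N)
        (-1) ^+ (i + j + 1)%N * omega (Q i) (Q j).

Definition Gfun (R : realType) (d n : nat) (Q : 'I_n -> V R d) : R :=
  2 * \sum_(i < n) dot (Q i).1 (Q i).2
  + 4 * \sum_(i < n) \sum_(j < n | (i < j)%N)
        (-1) ^+ (j - i)%N * dot (Q j).1 (Q i).2.

Definition midpoly (R : realType) (d n : nat) (Z : 'I_n -> V R d) : 'I_n -> V R d :=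
  fun i => (1/2 : R) *: (Z i + Z (ordS i)).

Definition midline (R : realType) (d n : nat) (Z : 'I_n.+1 -> V R d) : 'I_n -> V R d :=
  fun i => (1/2 : R) *: (Z (widen_ord (leqnSn n) i) + Z (lift ord0 i)).

Definition L1 (R : realType) (d : nat) (z : V R d) := z.2 = 0.
Definition L2 (R : realType) (d : nat) (z : V R d) := z.1 = 0.

From HB Require Import structures.
From mathcomp Require Import all_boot all_order all_algebra.
From mathcomp Require Import all_classical all_reals all_analysis.
From mathcomp Require Import ring lra.
Import Order.TTheory GRing.Theory Num.Theory.
Local Open Scope ring_scope.

(* F and G are quadratic forms, so t |-> F (Q + t xi) is a quadratic polynomial
   whose linear coefficient regroups as sum_k omega (xi_k, D_k Q) for explicit
   alternating sums D_k Q of the vertices of Q (Fgrad, Ggrad).  Hence Q is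
   critical on M^n iff each D_k Q lies in T^omega_{Q_k} M.  When Q is the
   midpoint polygon of Z, the alternating sums of midpoints telescope and
   D_k Q = z_{k+1} - z_k, which is exactly the billiard condition.  In the
   periodic case the telescoping closes up because (-1)^n = -1 for odd n; in
   the link case the two boundary terms are the y-part of z_1 and the x-part of
   z_{n+1}, which vanish on L1 and L2. *)

Lemma quadratic_is_derive0P {R : realType} {a b c : R} {f : R -> R} :
  (forall t, f t = a + t * (b + t * c)) -> is_derive (0 : R) (1 : R) f 0 <-> b = 0.
Proof.
move=> fE; pose P := a%:P + 'X * (b%:P + 'X * c%:P).
have -> : f = horner P by apply/funext => t; rewrite fE !hornerE.
have dP : (deriv P).[0] = b by rewrite !poly.derivE !hornerE; lra.
have := is_derive_poly P 0; rewrite dP => Pb.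
split=> [P0|b0]; last by move: Pb; rewrite b0.
by rewrite -(@derive_val _ _ _ _ _ _ _ Pb) (@derive_val _ _ _ _ _ _ _ P0).
Qed.

Lemma big_quadratic (R : pzSemiRingType) I (r : seq I) (P : pred I) (A B C : I -> R) (t : R) :
  \sum_(i <- r | P i) (A i + t * (B i + t * C i)) =
  \sum_(i <- r | P i) A i + t * (\sum_(i <- r | P i) B i + t * \sum_(i <- r | P i) C i).
Proof. by rewrite [t * \sum_(i <- r | P i) C i]mulr_sumr -big_split mulr_sumr -big_split. Qed.

Lemma mulr_quadratic (R : comPzRingType) (s a b c t : R) :
  s * (a + t * (b + t * c)) = s * a + t * (s * b + t * (s * c)).
Proof. ring. Qed.

Section Bilinear.
Context {R : realType} {d : nat}.
Implicit Types (u v w : 'rV[R]_d) (a b c e : V R d).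

Lemma dotC u v : dot u v = dot v u.
Proof. by apply: eq_bigr => i _; rewrite mulrC. Qed.

Lemma dotDl u v w : dot (u + v) w = dot u w + dot v w.
Proof. by rewrite /dot -big_split; apply: eq_bigr => i _; rewrite mxE mulrDl. Qed.

Lemma dotZl (k : R) u w : dot (k *: u) w = k * dot u w.
Proof. by rewrite /dot mulr_sumr; apply: eq_bigr => i _; rewrite mxE mulrA. Qed.

Lemma dotDr u v w : dot w (u + v) = dot w u + dot w v.
Proof. by rewrite !(dotC w) dotDl. Qed.

Lemma dotZr (k : R) u w : dot w (k *: u) = k * dot w u.
Proof. by rewrite !(dotC w) dotZl. Qed.

Lemma dot0r u : dot u 0 = 0.
Proof. by rewrite -(scale0r 0) dotZr mul0r. Qed.

Lemma dotNr u v : dot u (- v) = - dot u v.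
Proof. by rewrite -scaleN1r dotZr mulN1r. Qed.

Lemma dot_sumr I (r : seq I) (P : pred I) (F : I -> 'rV[R]_d) u :
  dot u (\sum_(i <- r | P i) F i) = \sum_(i <- r | P i) dot u (F i).
Proof.
by apply: (big_rec2 (fun x y => dot u x = y)) => [|i x y _ <-]; rewrite ?dot0r ?dotDr.
Qed.

Lemma omega_antisym a b : omega a b = - omega b a.
Proof. by rewrite /omega opprB (dotC a.1) (dotC a.2). Qed.

Lemma omegaDr a b c : omega a (b + c) = omega a b + omega a c.
Proof. by rewrite /omega !dotDr addrACA opprD. Qed.

Lemma omegaZr (k : R) a b : omega a (k *: b) = k * omega a b.
Proof. by rewrite /omega !dotZr mulrBr. Qed.

Lemma omegaDl a b c : omega (b + c) a = omega b a + omega c a.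
Proof. by rewrite omega_antisym omegaDr opprD -!omega_antisym. Qed.

Lemma omegaZl (k : R) a b : omega (k *: b) a = k * omega b a.
Proof. by rewrite omega_antisym omegaZr -mulrN -omega_antisym. Qed.

Lemma omega0r a : omega a 0 = 0.
Proof. by rewrite -(scale0r 0) omegaZr mul0r. Qed.

Lemma omega0l a : omega 0 a = 0.
Proof. by rewrite omega_antisym omega0r oppr0. Qed.

Lemma omegaBr a b c : omega a (b - c) = omega a b - omega a c.
Proof. by rewrite omegaDr -scaleN1r omegaZr mulN1r. Qed.

Lemma omega_sumr I (r : seq I) (P : pred I) (F : I -> V R d) a :
  omega a (\sum_(i <- r | P i) F i) = \sum_(i <- r | P i) omega a (F i).
Proof.
by apply: (big_rec2 (fun x y => omega a x = y)) => [|i x y _ <-]; rewrite ?omega0r ?omegaDr.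
Qed.

Lemma omega_line a b c e (t : R) :
  omega (a + t *: b) (c + t *: e) =
  omega a c + t * ((omega a e + omega b c) + t * omega b e).
Proof. rewrite omegaDl !omegaDr !omegaZl !omegaZr; ring. Qed.

Lemma dot_line u v w w' (t : R) :
  dot (u + t *: v) (w + t *: w') =
  dot u w + t * ((dot u w' + dot v w) + t * dot v w').
Proof. rewrite dotDl !dotDr !dotZl !dotZr; ring. Qed.

End Bilinear.

Section CriticalPoints.
Context {R : realType} {d : nat} {N : Type} {phi : N -> V R d} {T : N -> {vspace V R d}}.

Lemma crit_on_MnP n (Fn : ('I_n -> V R d) -> R) (p : 'I_n -> N) (D : 'I_n -> V R d) :
  (forall xi t, Fn (fun i => phi (p i) + t *: xi i) =
     Fn (phi \o p) + t * (\sum_(i < n) omega (xi i) (D i) + t * Fn xi)) ->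
  crit_on_Mn phi T Fn p <-> forall i, in_somp (T (p i)) (D i).
Proof.
move=> FnE; split=> [crit i zeta Tzeta | DT xi Txi].
- pose xi j := if j == i then zeta else 0.
  have Txi j : xi j \in T (p j) by rewrite /xi; case: eqP => [->|_]; rewrite ?mem0v.
  move/(quadratic_is_derive0P (FnE xi)): (crit xi Txi).
  rewrite (bigD1 i) //= big1 => [|j /negPf ji]; last by rewrite /xi ji omega0l.
  by rewrite addr0 /xi eqxx omega_antisym => /eqP; rewrite oppr_eq0 => /eqP.
- apply/(quadratic_is_derive0P (FnE xi)).
  by rewrite big1 // => i _; rewrite omega_antisym DT ?oppr0.
Qed.

Lemma osb_corr_crit_on_Mn {n} {z z' : 'I_n -> V R d} {Fn : ('I_n -> V R d) -> R}
    {D : ('I_n -> V R d) -> 'I_n -> V R d} :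
  (forall Q xi t, Fn (fun i => Q i + t *: xi i) =
     Fn Q + t * (\sum_(i < n) omega (xi i) (D Q i) + t * Fn xi)) ->
  (forall i, D (fun j => (1/2) *: (z j + z' j)) i = z' i - z i) ->
  (forall i, osb_corr phi T (z i) (z' i)) <->
  exists p, (forall i, phi (p i) = (1/2) *: (z i + z' i)) /\ crit_on_Mn phi T Fn p.
Proof.
move=> FnE DE.
have critP p : (forall i, phi (p i) = (1/2) *: (z i + z' i)) ->
    crit_on_Mn phi T Fn p <-> forall i, in_somp (T (p i)) (z' i - z i).
  move=> pE; apply: crit_on_MnP => xi t.
  have -> : phi \o p = (fun j => (1/2) *: (z j + z' j)) by apply/funext => j; apply: pE.
  under eq_bigr do rewrite -DE.
  by rewrite -FnE; congr Fn; apply/funext => i; rewrite pE.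
split=> [corr | [p [pE crit]] i].
- have [p pP] := choice corr; exists p.
  have pE i : phi (p i) = (1/2) *: (z i + z' i) by case: (pP i).
  by split=> //; apply/(critP p pE).2 => i; case: (pP i).
- by exists (p i); split; [apply: pE | apply: (critP p pE).1].
Qed.

End CriticalPoints.

Lemma signr_subn (R : pzRingType) (i k : nat) : (i <= k)%N ->
  (-1) ^+ (k - i) = (-1) ^+ k * (-1) ^+ i :> R.
Proof. by move=> ik; rewrite -signr_odd oddB // signr_addb !signr_odd. Qed.

Lemma big_ord_gtn (W : nmodType) n k (F : nat -> W) :
  \sum_(j < n | (k < j)%N) F j = \sum_(k.+1 <= j < n) F j.
Proof. by rewrite big_geq_mkord. Qed.

Lemma big_ord_ltn (W : nmodType) n k (F : nat -> W) : (k <= n)%N ->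
  \sum_(j < n | (j < k)%N) F j = \sum_(0 <= j < k) F j.
Proof. by move=> kn; rewrite big_mkord (big_ord_widen n F kn). Qed.

Lemma scale2_half (R : numFieldType) (W : lmodType R) (v : W) : 2 *: ((1 / 2) *: v) = v.
Proof. by rewrite scalerA div1r mulfV ?pnatr_eq0 // scale1r. Qed.

Lemma alt_sum_midpoints (R : numFieldType) (W : lmodType R) (z : nat -> W) a b :
  (a <= b)%N ->
  \sum_(a <= j < b) ((-1) ^+ j * 2) *: ((1 / 2) *: (z j + z j.+1)) =
  (-1) ^+ a *: z a - (-1) ^+ b *: z b.
Proof.
move=> ab; rewrite (telescope_sumr_eq (fun j => - ((-1) ^+ j *: z j))) // => [|j _].
  by rewrite opprK addrC.
by rewrite -scalerA scale2_half opprK exprS mulN1r scaleNr opprK scalerDr addrC.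
Qed.

Lemma alt_sum_midpoints_head (R : numFieldType) (W : lmodType R) (z : nat -> W) k :
  z 0%N = 0 ->
  2 *: ((1 / 2) *: (z k + z k.+1)) +
  \sum_(0 <= i < k) (4 * (-1) ^+ (k - i)) *: ((1 / 2) *: (z i + z i.+1)) = z k.+1 - z k.
Proof.
move=> z0; rewrite (eq_big_nat _ _ (F2 := fun i =>
  (2 * (-1) ^+ k) *: (((-1) ^+ i * 2) *: ((1 / 2) *: (z i + z i.+1))))) => [|i /andP[_ ik]].
  rewrite -scaler_sumr alt_sum_midpoints // z0 scale2_half expr0 scaler0 sub0r.
  rewrite scalerN -scalerA signrZK scaler_nat mulr2n.
  by rewrite opprD addrACA subrr add0r.
by rewrite !scalerA signr_subn 1?ltnW //; congr (_ *: _); ring.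
Qed.

Lemma alt_sum_midpoints_tail (R : numFieldType) (W : lmodType R) (z : nat -> W) k n :
  (k < n)%N -> z n = 0 ->
  2 *: ((1 / 2) *: (z k + z k.+1)) +
  \sum_(k.+1 <= j < n) (4 * (-1) ^+ (j - k)) *: ((1 / 2) *: (z j + z j.+1)) = z k - z k.+1.
Proof.
move=> kn zn; rewrite (eq_big_nat _ _ (F2 := fun j =>
  (2 * (-1) ^+ k) *: (((-1) ^+ j * 2) *: ((1 / 2) *: (z j + z j.+1))))) => [|j /andP[kj _]].
  rewrite -scaler_sumr alt_sum_midpoints // zn scale2_half scaler0 subr0.
  rewrite exprS mulN1r scaleNr scalerN -scalerA signrZK scaler_nat mulr2n.
  by rewrite opprD addrACA subrr addr0.
by rewrite !scalerA signr_subn 1?ltnW //; congr (_ *: _); ring.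
Qed.

Section PeriodicOrbits.
Variables (R : realType) (d n : nat).
Implicit Types (Q xi Z : 'I_n -> V R d).

Definition Fgrad Q (k : 'I_n) : V R d :=
  \sum_(j < n | (k < j)%N) (2 * (-1) ^+ (k + j + 1)) *: Q j
  - \sum_(j < n | (j < k)%N) (2 * (-1) ^+ (k + j + 1)) *: Q j.

Lemma sum_omega_Fgrad Q xi :
  \sum_(k < n) omega (xi k) (Fgrad Q k) =
  2 * \sum_(i < n) \sum_(j < n | (i < j)%N)
        (-1) ^+ (i + j + 1) * (omega (Q i) (xi j) + omega (xi i) (Q j)).
Proof.
have -> : \sum_(k < n) omega (xi k) (Fgrad Q k) =
  \sum_(i < n) \sum_(j < n | (i < j)%N) 2 * (-1) ^+ (i + j + 1) * omega (xi i) (Q j)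
  - \sum_(i < n) \sum_(j < n | (j < i)%N) 2 * (-1) ^+ (i + j + 1) * omega (xi i) (Q j).
  rewrite -sumrB; apply: eq_bigr => i _; rewrite omegaBr !omega_sumr.
  by congr (_ - _); apply: eq_bigr => j _; rewrite omegaZr.
rewrite [in X in _ - X](exchange_big_dep xpredT) //= -sumrB mulr_sumr.
apply: eq_bigr => i _; rewrite -sumrB mulr_sumr.
apply: eq_bigr => j _; rewrite (omega_antisym (xi j)) [(j + i)%N]addnC; ring.
Qed.

Lemma Ffun_line Q xi (t : R) :
  Ffun (fun i => Q i + t *: xi i) =
  Ffun Q + t * (\sum_(k < n) omega (xi k) (Fgrad Q k) + t * Ffun xi).
Proof.
rewrite /Ffun.
under eq_bigr do under eq_bigr do rewrite omega_line mulr_quadratic.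
under eq_bigr do rewrite big_quadratic.
by rewrite big_quadratic sum_omega_Fgrad; ring.
Qed.

Lemma Fgrad_midpoly Z k : odd n -> Fgrad (midpoly Z) k = Z (ordS k) - Z k.
Proof.
move=> odd_n; have n_gt0 : (0 < n)%N := leq_ltn_trans (leq0n k) (ltn_ord k).
pose z j := Z (Ordinal (ltn_pmod j n_gt0)).
have zE (j : 'I_n) : Z j = z j by congr Z; apply: val_inj; rewrite /= modn_small.
have zSE (j : 'I_n) : Z (ordS j) = z j.+1 by congr Z; apply: val_inj.
pose h j := ((-1) ^+ j * 2) *: ((1 / 2) *: (z j + z j.+1)).
have termE (j : 'I_n) : (2 * (-1) ^+ (k + j + 1)) *: midpoly Z j = - ((-1) ^+ k *: h j).
  rewrite /midpoly /h zE zSE !scalerA -scaleNr; congr (_ *: _).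
  by rewrite -addnA addn1 exprD exprS; ring.
rewrite /Fgrad; under [X in X - _]eq_bigr do rewrite termE.
under [X in _ - X]eq_bigr do rewrite termE.
rewrite !sumrN -!scaler_sumr (big_ord_gtn _ _ _ h) (big_ord_ltn _ _ _ h) 1?ltnW //.
rewrite !alt_sum_midpoints // -zE -zSE.
have -> : z n = z 0 by congr Z; apply: val_inj; rewrite /= modnn mod0n.
rewrite -[(-1) ^+ n]signr_odd odd_n expr1 expr0 exprS mulN1r !scaleNr !scale1r.
by rewrite !scalerBr !scalerN !signrZK !opprK opprD opprK addrA subrK.
Qed.
End PeriodicOrbits.

Section LinkOrbits.
Variables (R : realType) (d n : nat).
Implicit Types (Q xi : 'I_n -> V R d).

Definition Ggrad Q (k : 'I_n) : V R d :=
  (- (2 *: (Q k).1 + \sum_(j < n | (k < j)%N) (4 * (-1) ^+ (j - k)) *: (Q j).1),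
   2 *: (Q k).2 + \sum_(i < n | (i < k)%N) (4 * (-1) ^+ (k - i)) *: (Q i).2).

Lemma sum_omega_Ggrad Q xi :
  \sum_(k < n) omega (xi k) (Ggrad Q k) =
  2 * \sum_(i < n) (dot (Q i).1 (xi i).2 + dot (xi i).1 (Q i).2) +
  4 * \sum_(i < n) \sum_(j < n | (i < j)%N)
        (-1) ^+ (j - i) * (dot (Q j).1 (xi i).2 + dot (xi j).1 (Q i).2).
Proof.
have gradx : \sum_(k < n) dot (xi k).2 (- (Ggrad Q k).1) =
    2 * \sum_(i < n) dot (Q i).1 (xi i).2 +
    4 * \sum_(i < n) \sum_(j < n | (i < j)%N) (-1) ^+ (j - i) * dot (Q j).1 (xi i).2.
  under eq_bigr do rewrite /= opprK dotDr dotZr dot_sumr.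
  rewrite big_split /= !mulr_sumr; congr (_ + _); apply: eq_bigr => i _.
    by rewrite dotC.
  by rewrite mulr_sumr; apply: eq_bigr => j _; rewrite dotZr dotC mulrA.
have grady : \sum_(k < n) dot (xi k).1 (Ggrad Q k).2 =
    2 * \sum_(i < n) dot (xi i).1 (Q i).2 +
    4 * \sum_(i < n) \sum_(j < n | (i < j)%N) (-1) ^+ (j - i) * dot (xi j).1 (Q i).2.
  under eq_bigr do rewrite /= dotDr dotZr dot_sumr.
  rewrite big_split /= !mulr_sumr (exchange_big_dep xpredT) //=; congr (_ + _).
  by apply: eq_bigr => j _; rewrite mulr_sumr; apply: eq_bigr => i _; rewrite dotZr mulrA.
have -> : \sum_(k < n) omega (xi k) (Ggrad Q k) =
    \sum_(k < n) dot (xi k).1 (Ggrad Q k).2 + \sum_(k < n) dot (xi k).2 (- (Ggrad Q k).1).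
  by rewrite -big_split; apply: eq_bigr => k _; rewrite dotNr.
have -> : \sum_(i < n) \sum_(j < n | (i < j)%N)
    (-1) ^+ (j - i) * (dot (Q j).1 (xi i).2 + dot (xi j).1 (Q i).2) =
  \sum_(i < n) \sum_(j < n | (i < j)%N) (-1) ^+ (j - i) * dot (Q j).1 (xi i).2 +
  \sum_(i < n) \sum_(j < n | (i < j)%N) (-1) ^+ (j - i) * dot (xi j).1 (Q i).2.
  rewrite -big_split; apply: eq_bigr => i _.
  by rewrite -big_split; apply: eq_bigr => j _; rewrite mulrDr.
by rewrite gradx grady big_split /=; ring.
Qed.

Lemma Gfun_line Q xi (t : R) :
  Gfun (fun i => Q i + t *: xi i) =
  Gfun Q + t * (\sum_(k < n) omega (xi k) (Ggrad Q k) + t * Gfun xi).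
Proof.
rewrite /Gfun /=.
under eq_bigr do rewrite dot_line.
under [X in _ + 4 * X = _]eq_bigr do under eq_bigr do rewrite dot_line mulr_quadratic.
under [X in _ + 4 * X = _]eq_bigr do rewrite big_quadratic.
by rewrite !big_quadratic sum_omega_Ggrad; ring.
Qed.

Lemma Ggrad_midline (Z : 'I_n.+1 -> V R d) k : L1 (Z ord0) -> L2 (Z ord_max) ->
  Ggrad (midline Z) k = Z (lift ord0 k) - Z (widen_ord (leqnSn n) k).
Proof.
move=> Z0 Zn; pose x j := (Z (inord j)).1; pose y j := (Z (inord j)).2.
have widenE (j : 'I_n) : widen_ord (leqnSn n) j = inord j.
  by apply: val_inj; rewrite /= inordK // ltnW // ltnS.
have liftE (j : 'I_n) : lift ord0 j = inord j.+1.
  by apply: val_inj; rewrite /= inordK // ltnS.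
have midxE (j : 'I_n) : (midline Z j).1 = (1 / 2) *: (x j + x j.+1).
  by rewrite /midline widenE liftE.
have midyE (j : 'I_n) : (midline Z j).2 = (1 / 2) *: (y j + y j.+1).
  by rewrite /midline widenE liftE.
rewrite widenE liftE /Ggrad; congr (_, _).
- under eq_bigr do rewrite midxE.
  rewrite midxE (big_ord_gtn _ _ _ (fun j => (4 * (-1) ^+ (j - k)) *: ((1 / 2) *: (x j + x j.+1)))).
  rewrite alt_sum_midpoints_tail ?opprB //.
  by rewrite /x -Zn; congr (Z _).1; apply: val_inj; rewrite /= inordK.
- under eq_bigr do rewrite midyE.
  rewrite midyE (big_ord_ltn _ _ _ (fun i => (4 * (-1) ^+ (k - i)) *: ((1 / 2) *: (y i + y i.+1)))).
    rewrite alt_sum_midpoints_head //.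
    by rewrite /y -Z0; congr (Z _).2; apply: val_inj; rewrite /= inordK.
  exact: ltnW.
Qed.

End LinkOrbits.

Theorem mainTheorem8 (R : realType) (d : nat) (N : Type) (phi : N -> V R d)
    (T : N -> {vspace V R d}) :
  (* (1) periodic orbits, n odd *)
  (forall (n : nat), odd n -> forall Z : 'I_n -> V R d,
     (forall i : 'I_n, osb_corr phi T (Z i) (Z (ordS i))) <->
     (exists p : 'I_n -> N,
        (forall i, phi (p i) = midpoly Z i) /\
        crit_on_Mn phi T (@Ffun R d n) p))
  /\
  (* (2) n-link orbits connecting L1 and L2 *)
  (forall (n : nat) (Z : 'I_n.+1 -> V R d),
     L1 (Z ord0) -> L2 (Z ord_max) ->
     ((forall i : 'I_n,
         osb_corr phi T (Z (widen_ord (leqnSn n) i)) (Z (lift ord0 i))) <->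
      (exists p : 'I_n -> N,
         (forall i, phi (p i) = midline Z i) /\
         crit_on_Mn phi T (@Gfun R d n) p))).
Proof.
split=> [n odd_n Z | n Z Z0 Zn].
- apply: (osb_corr_crit_on_Mn (@Ffun_line R d n)) => i.
  exact: Fgrad_midpoly.
- apply: (osb_corr_crit_on_Mn (@Gfun_line R d n)) => i.
  exact: Ggrad_midline.
Qed.
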